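(* Let $n\ge 3$ and let $s,t\in S_n$ be such that the commutator $[s,t]=sts^{-1}t^{-1}$ is the $3$-cycle $(z\;y\;x)$ (i.e. $z\mapsto y\mapsto x\mapsto z$), with $x,y,z$ distinct. Then exactly one of the following holds: (a) $x,y,z$ lie in the same cycle of $s$, in this cyclic order, i.e. $d_s(x,y)+d_s(y,z)+d_s(z,x)=d_s(x,x)$; (b) for some cyclic relabeling $(x',y',z')$ of $(x,y,z)$ (one of $(x,y,z)$, $(y,z,x)$, $(z,x,y)$, so that $(z'\;y'\;x')=(z\;y\;x)$), the points $x'$ and $y'$ lie in the same cycle of $s$, the point $z'$ lies in a different cycle of $s$, and $d_s(z',z')=d_s(y',x')$.
   Context: Permutations are composed as functions: $(st)(i)=s(t(i))$. For $s\in S_n$, the $s$-distance $d_s:\{1,\dots,n\}^2\to\mathbb{N}\cup\{\infty\}$ is defined by $d_s(u,v)=\min\{d\ge 1: s^d(u)=v\}$ if $u,v$ lie in the same cycle of $s$, and $d_s(u,v)=\infty$ otherwise. In particular $d_s(u,u)$ is the length of the cycle of $s$ containing $u$. *)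

From mathcomp Require Import all_boot all_fingroup.
From Stdlib Require Import ClassicalEpsilon.
Set Implicit Arguments. Unset Strict Implicit. Unset Printing Implicit Defensive.

(* Note: mathcomp's group product on perms is left-to-right
   ((s * t) i = t (s i)); to avoid confusion, the commutator is stated
   pointwise in the theorem as s (t (s^-1 (t^-1 i))). *)

Definition ds_pred n (s : 'S_n) (u v : 'I_n) : pred nat :=
  fun d => (0 < d) && ((s ^+ d)%g u == v).

(* s-distance: Some (min{d >= 1 : s^d u = v}) if such d exists, None (= infinity) otherwise *)
Definition ds n (s : 'S_n) (u v : 'I_n) : option nat :=
  match excluded_middle_informative (exists d, ds_pred s u v d) with
  | left H => Some (ex_minn H)
  | right _ => None
  end.

Definition cyc3 n (z y x : 'I_n) (i : 'I_n) : 'I_n :=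
  if i == z then y else if i == y then x else if i == x then z else i.

Definition cond_a n (s : 'S_n) (x y z : 'I_n) : Prop :=
  exists a b c e, [/\ ds s x y = Some a, ds s y z = Some b, ds s z x = Some c,
                      ds s x x = Some e & a + b + c = e].

Definition cond_b1 n (s : 'S_n) (x' y' z' : 'I_n) : Prop :=
  [/\ ds s x' y' <> None, ds s x' z' = None & ds s z' z' = ds s y' x'].

Definition cond_b n (s : 'S_n) (x y z : 'I_n) : Prop :=
  cond_b1 s x y z \/ cond_b1 s y z x \/ cond_b1 s z x y.

From mathcomp Require Import all_boot all_fingroup zify.
From Stdlib Require Import ClassicalEpsilon.
Set Implicit Arguments. Unset Strict Implicit. Unset Printing Implicit Defensive.

(* Put k := t^-1 s^-1 t s (as a function, i |-> s (t (s^-1 (t^-1 i)))), so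
   that the hypothesis reads k = (z y x), and c := k^-1 = (x y z).  In the
   group 'S_n one has s * c = s ^ t (with mathcomp's left-to-right product,
   (s * c) j = c (s j)), so s and c o s are conjugate and therefore have the
   same cycle type: for every L, equally many points lie on cycles of
   length L (same_cycle_type).
   Composing s with a permutation c supported on a set M only reroutes the
   s-cycles at the points of M: every s-arc leading into M is continued at the
   c-image of its end point (arc_step).  Cycles avoiding M are untouched, so
   the cycle type changes as soon as the cycles through M are all shorter
   than L on one side while some point of M lies on a cycle of length L on
   the other side (cycle_type_grows / cycle_type_shrinks).
   For the 3-cycle c = (x y z) this happens in every configuration except
   (a) and (b):
   - x, y, z on one s-cycle in the cyclic order x, z, y: it splits into
     three shorter cycles (split_cycle);
   - x, y on one cycle, z on another: lengths d(x,y) + d(y,x) and d(z,z)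
     become d(x,y) + d(z,z) and d(y,x), a change unless d(z,z) = d(y,x)
     (merge_two; rotations of the labels cover the other pairs);
   - three different cycles merge into one (merge_three).
   Finally (a) puts x, y, z on one cycle while (b) separates two of them, so
   the two alternatives exclude each other. *)

(* In this file [order f u] is the size of the f-orbit of u (fingraph), not
   the order of a group element. *)
Local Notation order := fingraph.order.

Section PermOrder.
Variables (T : finType) (f : {perm T}).
Implicit Types (u v : T).

Lemma iter_order_perm u : iter (order f u) f u = u.
Proof. exact: iter_order (@perm_inj _ f) u. Qed.

Lemma iter_eq_pos u a b : a < order f u -> b < order f u ->
  (iter a f u == iter b f u) = (a == b).
Proof.
move=> ha hb; apply/eqP/eqP=> [e|-> //].
by rewrite -(findex_iter ha) e findex_iter.
Qed.

Lemma iter_order_min u k : 0 < k < order f u -> iter k f u != u.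
Proof.
case/andP=> k0 ko; rewrite -[u in _ != u]/(iter 0 f u) iter_eq_pos //.
by rewrite -lt0n.
Qed.

Lemma order_le u K : 0 < K -> iter K f u = u -> order f u <= K.
Proof.
move=> K0 e; rewrite leqNgt; apply/negP=> lt.
by have := @iter_order_min u K; rewrite K0 lt e eqxx => /(_ isT).
Qed.

Lemma order_period u K : 0 < K -> iter K f u = u ->
  (forall k, 0 < k < K -> iter k f u != u) -> order f u = K.
Proof.
move=> K0 e Kmin; apply/eqP; rewrite eqn_leq order_le // leqNgt; apply/negP=> lt.
have := Kmin (order f u); rewrite fingraph.order_gt0 lt iter_order_perm eqxx.
by move/(_ isT).
Qed.

Lemma order_fconnect u v : fconnect f u v -> order f u = order f v.
Proof. by move=> e; apply/eq_card/(same_connect (fconnect_sym (@perm_inj _ f)) e). Qed.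

Lemma order_iter u k : order f (iter k f u) = order f u.
Proof. by symmetry; apply: order_fconnect; apply: fconnect_iter. Qed.

Lemma findex_shift u a b : a <= b -> b - a < order f u ->
  findex f (iter a f u) (iter b f u) = b - a.
Proof. by move=> ab lt; rewrite -{1}(subnK ab) iterD findex_iter ?order_iter. Qed.

Lemma iter_notin_orbit u v k : ~~ fconnect f u v -> iter k f u != v.
Proof. by apply: contraNneq => <-; apply: fconnect_iter. Qed.

End PermOrder.

(* Equal cycle type, phrased as equal numbers of points on cycles of each
   length L. *)
Definition same_cycle_type (T : finType) (g h : {perm T}) :=
  forall L, #|order_set g L| = #|order_set h L|.

(* Conjugation by t transports cycles along t, hence preserves cycle type. *)
Section Conjugation.
Variables (T : finType) (f t : {perm T}).

Lemma iter_conjg k u : iter k (f ^ t)%g (t u) = t (iter k f u).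
Proof. by elim: k => //= k ->; rewrite conjgE !permM permK. Qed.

Lemma order_conjg u : order (f ^ t)%g (t u) = order f u.
Proof.
apply: order_period; [exact: fingraph.order_gt0 | by rewrite iter_conjg iter_order_perm |].
by move=> k kb; rewrite iter_conjg (inj_eq (@perm_inj _ t)) iter_order_min.
Qed.

Lemma same_cycle_type_conjg : same_cycle_type f (f ^ t)%g.
Proof.
move=> L; symmetry; rewrite -cardsE -(card_preimset _ (@perm_inj _ t)).
by apply: eq_card => u; rewrite !inE order_conjg.
Qed.
End Conjugation.

Lemma card_level_lt (T : finType) (o1 o2 : T -> nat) (U : {pred T}) L w :
  (forall i, i \notin U -> o1 i = o2 i) -> (forall i, i \in U -> o1 i < L) ->
  w \in U -> o2 w = L -> #|[pred i | o1 i == L]| < #|[pred i | o2 i == L]|.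
Proof.
move=> out inU wU w2; apply/proper_card/properP; split.
  apply/subsetP=> i; rewrite !inE => /eqP i1.
  have [iU|iU] := boolP (i \in U); first by have := inU i iU; rewrite i1 ltnn.
  by rewrite -out // i1.
by exists w; rewrite !inE ?w2 // neq_ltn inU.
Qed.

(* Composing g with a permutation c supported on M: h := g * c maps j to
   c (g j). *)
Section Surgery.
Variables (T : finType) (g c : {perm T}) (M : {pred T}).
Hypothesis c_out : forall j, j \notin M -> c j = j.
Local Notation h := (g * c)%g.

Lemma c_stable j : j \in M -> c j \in M.
Proof.
move=> jM; apply: contraT => cM; move: (c_out cM) => /perm_inj cj.
by rewrite cj jM in cM.
Qed.

Definition clear_between u a b := forall m, a < m < b -> iter m g u \notin M.

Lemma iter_clear u b k : clear_between u 0 b -> k < b -> iter k h u = iter k g u.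
Proof.
move=> cl; elim: k => // k IH kb.
by rewrite !iterS IH ?(ltnW kb) // permM c_out //; apply: (cl k.+1); rewrite kb.
Qed.

Lemma arc_step u a b : a < b -> clear_between u a b ->
  iter (b - a) h (iter a g u) = c (iter b g u).
Proof.
move=> ab cl; have cl' : clear_between (iter a g u) 0 (b - a).
  by move=> m /andP[m0 mb]; rewrite -iterD; apply: cl; lia.
case def_K : (b - a) cl' => [|K] cl'; first lia.
rewrite iterS (iter_clear cl') ?def_K // permM -iterS -iterD.
by have -> : K.+1 + a = b by lia.
Qed.

Definition touches (f : {perm T}) u := [exists w, (w \in M) && fconnect f u w].

Lemma touched_order (f : {perm T}) u :
  touches f u -> exists2 w, w \in M & order f u = order f w.
Proof. by case/existsP=> w /andP[wM uw]; exists w => //; apply: order_fconnect. Qed.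

Lemma order_untouched u : ~~ touches g u -> order g u = order h u.
Proof.
move=> nt; have agree k : iter k h u = iter k g u.
  apply: (@iter_clear u k.+1) => // m _; apply: contra nt => mM.
  by apply/existsP; exists (iter m g u); rewrite mM fconnect_iter.
symmetry; apply: order_period; first exact: fingraph.order_gt0.
  by rewrite agree iter_order_perm.
by move=> k kb; rewrite agree iter_order_min.
Qed.

(* A g-cycle meeting M lies in h-cycles meeting M: follow g until M is hit. *)
Lemma touches_h u : touches g u -> touches h u.
Proof.
case/existsP=> w /andP[wM uw].
have hit : exists k, iter k g u \in M by exists (findex g u w); rewrite iter_findex.
case: (ex_minnP hit) => -[|k] kM kmin; apply/existsP.
  by exists u; rewrite kM connect0.
have cl : clear_between u 0 k.+1.
  by move=> m /andP[_ mk]; apply: contraTN mk => /kmin; rewrite -leqNgt.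
exists (c (iter k.+1 g u)); rewrite c_stable //=.
have := @arc_step u 0 k.+1 isT cl; rewrite subn0 /= => <-; exact: (fconnect_iter _ k.+1).
Qed.

Lemma cycle_type_grows L w : (forall v, v \in M -> order g v < L) ->
  w \in M -> order h w = L -> ~ same_cycle_type g h.
Proof.
move=> gL wM hw /(_ L) /eqP; apply/negP; rewrite neq_ltn.
apply/orP; left; apply: (card_level_lt (U := touches g) (w := w)) => //.
- by move=> i /order_untouched.
- by move=> i /touched_order[v vM ->]; apply: gL.
- by apply/existsP; exists w; rewrite wM connect0.
Qed.

Lemma cycle_type_shrinks L w : (forall v, v \in M -> order h v < L) ->
  w \in M -> order g w = L -> ~ same_cycle_type g h.
Proof.
move=> hL wM gw /(_ L) /eqP; apply/negP; rewrite neq_ltn.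
apply/orP; right; apply: (card_level_lt (U := touches g) (w := w)) => //.
- by move=> i /order_untouched.
- by move=> i /touches_h/touched_order[v vM ->]; apply: hL.
- by apply/existsP; exists w; rewrite wM connect0.
Qed.
End Surgery.

Section ThreeCycle.
Variables (T : finType) (g c : {perm T}) (x y z : T).
Hypotheses (hxy : x != y) (hyz : y != z) (hxz : x != z).
Hypotheses (cx : c x = y) (cy : c y = z) (cz : c z = x).
Hypothesis c_fix : forall j, j != x -> j != y -> j != z -> c j = j.
Local Notation h := (g * c)%g.
Local Notation M := (pred3 x y z).

Let c_out j : j \notin M -> c j = j.
Proof. by rewrite !inE => /norP[jx /norP[jy jz]]; apply: c_fix. Qed.

(* x, y, z on one cycle in the cyclic order x, z, y: the cycle of length N
   splits into cycles of lengths d(x,z), d(z,y), d(y,x), all below N. *)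
Lemma split_cycle : fconnect g x y -> fconnect g x z ->
  findex g x z < findex g x y -> ~ same_cycle_type g h.
Proof.
move=> xy xz; set P := findex g x z; set p := findex g x y; set N := order g x.
move=> Pp; have pN : p < N := findex_max xy.
have P0 : 0 < P by rewrite lt0n findex_eq0.
have Ey : iter p g x = y := iter_findex xy.
have Ez : iter P g x = z := iter_findex xz.
have free m : 0 < m < N -> m != P -> m != p -> iter m g x \notin M.
  move=> mN mP mp; rewrite !inE -[x in _ == x]/(iter 0 g x) -Ey -Ez.
  by rewrite !iter_eq_pos //; lia.
have arc a b : a < b <= N -> (forall m, a < m < b -> [&& 0 < m < N, m != P & m != p]) ->
    iter (b - a) h (iter a g x) = c (iter b g x).
  move=> /andP[ab _] inner; apply: (arc_step c_out) => // m /inner /and3P[]; exact: free.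
have hx : iter P h x = x by move: (arc 0 P); rewrite subn0 Ez cz; apply; lia.
have hz : iter (p - P) h z = z by move: (arc P p); rewrite Ez Ey cy; apply; lia.
have hy : iter (N - p) h y = y.
  by move: (arc p N); rewrite Ey iter_order_perm cx; apply; lia.
apply: (cycle_type_shrinks c_out (L := N) (w := x)); rewrite ?inE ?eqxx //.
move=> v; rewrite !inE => /or3P[]/eqP->.
- by apply: leq_ltn_trans (order_le P0 hx) _; lia.
- by apply: leq_ltn_trans (order_le _ hy) _; lia.
- by apply: leq_ltn_trans (order_le _ hz) _; lia.
Qed.

Section MergeTwo.
Hypotheses (xy : fconnect g x y) (nxz : ~~ fconnect g x z).

Let nzx : ~~ fconnect g z x.
Proof. by rewrite (fconnect_sym (@perm_inj _ g)). Qed.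

Let nzy : ~~ fconnect g z y.
Proof.
apply: contra nzx => zy; apply: connect_trans zy _.
by rewrite (fconnect_sym (@perm_inj _ g)).
Qed.

Let clear_z : clear_between g M z 0 (order g z).
Proof.
move=> m mr; rewrite !inE (negbTE (iter_notin_orbit _ nzx)).
by rewrite (negbTE (iter_notin_orbit _ nzy)) (negbTE (iter_order_min mr)).
Qed.

Let clear_x a b : a < b <= order g x -> ~~ (a < findex g x y < b) ->
  clear_between g M x a b.
Proof.
move=> /andP[ab bN] np m /andP[am mb].
rewrite !inE (negbTE (iter_notin_orbit _ nxz)) orbF -[x in _ == x]/(iter 0 g x).
by rewrite -(iter_findex xy) !iter_eq_pos ?findex_max //; lia.
Qed.

Lemma merge_two_arcs : [/\ iter (findex g x y) h x = z, iter (order g z) h z = x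
  & iter (order g x - findex g x y) h y = y].
Proof.
have pN := findex_max xy; have Ey := iter_findex xy.
have p0 : 0 < findex g x y by rewrite lt0n findex_eq0.
split.
- have := arc_step c_out p0 (clear_x _ _); rewrite subn0 Ey cy; apply; lia.
- have := arc_step c_out (fingraph.order_gt0 _ _) clear_z.
  by rewrite subn0 iter_order_perm cz.
- have := arc_step c_out pN (clear_x _ _); rewrite Ey iter_order_perm cx; apply; lia.
Qed.

Lemma merge_two_order : order h x = order g z + findex g x y.
Proof.
have [hx hz _] := merge_two_arcs.
have pN := findex_max xy; have p0 : 0 < findex g x y by rewrite lt0n findex_eq0.
apply: order_period; [lia | by rewrite iterD hx hz |].
move=> k /andP[k0 kb]; case: (ltnP k (findex g x y)) => kp.
  by rewrite (iter_clear c_out (clear_x _ _) kp) ?iter_order_min ?k0 //; lia.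
rewrite -(subnK kp) iterD hx (iter_clear c_out clear_z) ?iter_notin_orbit //; lia.
Qed.

(* Cycles of lengths d(x,y) + d(y,x), d(z,z) become d(x,y) + d(z,z),
   d(y,x): the type changes unless d(z,z) = d(y,x). *)
Lemma merge_two : order g z != findex g y x -> ~ same_cycle_type g h.
Proof.
have [hx _ hy] := merge_two_arcs; have hxo := merge_two_order.
have pN := findex_max xy; have p0 : 0 < findex g x y by rewrite lt0n findex_eq0.
have -> : findex g y x = order g x - findex g x y.
  have := @findex_shift _ g x (findex g x y) (order g x).
  by rewrite (iter_findex xy) iter_order_perm; apply; lia.
have hzx : order h z = order h x by rewrite -hx order_iter.
case: ltngtP => // [rlt|rgt] _.
- apply: (cycle_type_shrinks c_out (L := order g x) (w := x)); rewrite ?inE ?eqxx //.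
  move=> v; rewrite !inE => /or3P[]/eqP->; try lia.
  by apply: leq_ltn_trans (order_le _ hy) _; lia.
- apply: (cycle_type_grows c_out (L := order g z + findex g x y) (w := x)).
  + by move=> v; rewrite !inE => /or3P[]/eqP->; rewrite -?(order_fconnect xy); lia.
  + by rewrite !inE eqxx.
  + exact: hxo.
Qed.
End MergeTwo.

Section MergeThree.
Hypotheses (nxy : ~~ fconnect g x y) (nxz : ~~ fconnect g x z) (nyz : ~~ fconnect g y z).

Let isolated u v : u \in M -> v \in M -> fconnect g u v -> v = u.
Proof.
have sym := fconnect_sym (@perm_inj _ g).
rewrite !inE => /or3P[]/eqP-> /or3P[]/eqP-> //;
  rewrite ?(negbTE nxy) ?(negbTE nxz) ?(negbTE nyz) // sym;
  by rewrite ?(negbTE nxy) ?(negbTE nxz) ?(negbTE nyz).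
Qed.

Let clear_own u : u \in M -> clear_between g M u 0 (order g u).
Proof.
move=> uM m mr; apply/negP=> mM; move: (iter_order_min mr).
by rewrite (isolated uM mM (fconnect_iter _ _ _)) eqxx.
Qed.

Let arc_own u : u \in M -> iter (order g u) h u = c u.
Proof.
move=> uM; have := arc_step c_out (fingraph.order_gt0 _ _) (clear_own uM).
by rewrite subn0 iter_order_perm.
Qed.

Let away u k : u \in M -> k < order g u -> iter k h u = iter k g u.
Proof. by move=> uM kb; apply: (iter_clear c_out (clear_own uM) kb). Qed.

Lemma merge_three_order : order h x = order g x + order g y + order g z.
Proof.
have xM : x \in M by rewrite !inE eqxx.
have yM : y \in M by rewrite !inE eqxx orbT.
have zM : z \in M by rewrite !inE eqxx !orbT.
have sym := fconnect_sym (@perm_inj _ g).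
have nyx : ~~ fconnect g y x by rewrite sym.
have nzx : ~~ fconnect g z x by rewrite sym.
have gx := fingraph.order_gt0 g x; have gy := fingraph.order_gt0 g y.
have gz := fingraph.order_gt0 g z.
apply: order_period; first lia.
  by rewrite addnC iterD addnC iterD arc_own // cx arc_own // cy arc_own // cz.
move=> k /andP[k0 kl]; case: (ltnP k (order g x)) => ka.
  by rewrite away // iter_order_min ?k0.
rewrite -(subnK ka) iterD arc_own // cx; case: (ltnP (k - order g x) (order g y)) => kb.
  by rewrite away ?iter_notin_orbit.
rewrite -(subnK kb) iterD arc_own // cy away ?iter_notin_orbit //; lia.
Qed.

Lemma merge_three : ~ same_cycle_type g h.
Proof.
apply: (cycle_type_grows c_out (w := x) _ _ merge_three_order); last by rewrite !inE eqxx.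
have gx := fingraph.order_gt0 g x; have gy := fingraph.order_gt0 g y.
have gz := fingraph.order_gt0 g z.
by move=> v; rewrite !inE => /or3P[]/eqP->; lia.
Qed.
End MergeThree.
End ThreeCycle.

Section Distance.
Variables (n : nat) (s : 'S_n).
Implicit Types (u v : 'I_n).

Lemma ds_Some u v d : 0 < d -> iter d s u = v ->
  (forall k, 0 < k < d -> iter k s u != v) -> ds s u v = Some d.
Proof.
move=> d0 dv dmin; rewrite /ds; case: excluded_middle_informative => [ex|nex].
  congr Some; case: ex_minnP => m /andP[m0]; rewrite permX => /eqP mv mmin.
  apply/eqP; rewrite eqn_leq mmin /ds_pred ?d0 ?permX ?dv ?eqxx // leqNgt.
  by apply/negP=> md; move: (dmin m); rewrite m0 md mv eqxx => /(_ isT).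
by case: nex; exists d; rewrite /ds_pred d0 permX dv eqxx.
Qed.

Lemma ds_None u v : ds s u v = None <-> ~~ fconnect s u v.
Proof.
rewrite /ds; case: excluded_middle_informative => [ex|nex]; split=> //.
  move=> /negP[]; case: ex => d; rewrite /ds_pred permX => /andP[_ /eqP <-].
  exact: fconnect_iter.
move=> _; apply/negP=> uv; apply: nex; exists (findex s u v + order s u).
rewrite /ds_pred permX iterD iter_order_perm iter_findex // eqxx andbT.
by rewrite addn_gt0 fingraph.order_gt0 orbT.
Qed.

Lemma ds_self u : ds s u u = Some (order s u).
Proof.
apply: ds_Some; [exact: fingraph.order_gt0 | exact: iter_order_perm |].
by move=> k; apply: iter_order_min.
Qed.

Lemma ds_findex u v : u != v -> fconnect s u v -> ds s u v = Some (findex s u v).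
Proof.
move=> uv uv_conn; apply: ds_Some; [by rewrite lt0n findex_eq0 | exact: iter_findex |].
move=> k /andP[_ kd]; apply/eqP=> kv.
have kN : k < order s u := ltn_trans kd (findex_max uv_conn).
by move: kd; rewrite -kv findex_iter // ltnn.
Qed.

Lemma cond_a_intro x y z : x != y -> y != z -> x != z ->
  fconnect s x y -> fconnect s x z -> findex s x y < findex s x z -> cond_a s x y z.
Proof.
move=> hxy hyz hxz xy xz lt; have sym := fconnect_sym (@perm_inj _ s).
have yz : fconnect s y z by apply: connect_trans _ xz; rewrite sym.
have zx : fconnect s z x by rewrite sym.
have PN := findex_max xz; have Ey := iter_findex xy; have Ez := iter_findex xz.
have Eyz : findex s y z = findex s x z - findex s x y.
  have := @findex_shift _ s x (findex s x y) (findex s x z).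
  by rewrite Ey Ez; apply; lia.
have Ezx : findex s z x = order s x - findex s x z.
  have := @findex_shift _ s x (findex s x z) (order s x).
  by rewrite Ez iter_order_perm; apply; lia.
exists (findex s x y), (findex s y z), (findex s z x), (order s x).
have hzx : z != x by rewrite eq_sym.
rewrite (ds_findex hxy xy) (ds_findex hyz yz) (ds_findex hzx zx) ds_self.
split=> //; lia.
Qed.

Lemma cond_b1_intro x y z : x != y -> fconnect s x y -> ~~ fconnect s x z ->
  order s z = findex s y x -> cond_b1 s x y z.
Proof.
move=> hxy xy nxz e; have hyx : y != x by rewrite eq_sym.
have yx : fconnect s y x by rewrite (fconnect_sym (@perm_inj _ s)).
split; [by move/ds_None; rewrite xy | exact/ds_None |].
by rewrite ds_self (ds_findex hyx yx) e.
Qed.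

(* (a) connects all three points, while (b) separates two of them. *)
Lemma cond_a_excludes_b x y z : cond_a s x y z -> ~ cond_b s x y z.
Proof.
have conn u v d : ds s u v = Some d -> fconnect s u v.
  by move=> uv; apply: contraT => /ds_None; rewrite uv.
case=> a [b [c [e [/conn xy /conn yz /conn zx _ _]]]].
by case=> [|[]] [_ /ds_None/negP nc _]; apply: nc; apply: connect_trans; eassumption.
Qed.

End Distance.

Lemma three_cycle_dichotomy n (s c : 'S_n) (x y z : 'I_n) :
  x != y -> y != z -> x != z -> c x = y -> c y = z -> c z = x ->
  (forall j, j != x -> j != y -> j != z -> c j = j) ->
  same_cycle_type s (s * c)%g -> cond_a s x y z \/ cond_b s x y z.
Proof.
move=> hxy hyz hxz cx cy cz c_fix same.
have hyx : y != x by rewrite eq_sym.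
have hzy : z != y by rewrite eq_sym.
have hzx : z != x by rewrite eq_sym.
have c_fix_yzx j : j != y -> j != z -> j != x -> c j = j by move=> *; apply: c_fix.
have c_fix_zxy j : j != z -> j != x -> j != y -> c j = j by move=> *; apply: c_fix.
have sym := fconnect_sym (@perm_inj _ s).
have [xy|nxy] := boolP (fconnect s x y); have [xz|nxz] := boolP (fconnect s x z).
- case: (ltngtP (findex s x y) (findex s x z)) => [lt|gt|eq].
  + by left; apply: cond_a_intro.
  + by case: (split_cycle hxy hyz hxz cx cy cz c_fix xy xz gt).
  + by move: hyz; rewrite -(iter_findex xy) eq iter_findex ?eqxx.
- have [e|ne] := eqVneq (order s z) (findex s y x).
  + by right; left; apply: cond_b1_intro.
  + by case: (merge_two hxy hyz hxz cx cy cz c_fix xy nxz ne).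
- have zx : fconnect s z x by rewrite sym.
  have nzy : ~~ fconnect s z y.
    by apply: contra nxy => zy; apply: connect_trans _ zy.
  have [e|ne] := eqVneq (order s y) (findex s x z).
  + by right; right; right; apply: cond_b1_intro.
  + by case: (merge_two hzx hxy hzy cz cx cy c_fix_zxy zx nzy ne).
- have [yz|nyz] := boolP (fconnect s y z).
  + have nyx : ~~ fconnect s y x by rewrite sym.
    have [e|ne] := eqVneq (order s x) (findex s z y).
    * by right; right; left; apply: cond_b1_intro.
    * by case: (merge_two hyz hzx hyx cy cz cx c_fix_yzx yz nyx ne).
  + by case: (merge_three hxy hyz hxz cx cy cz c_fix nxy nxz nyz).
Qed.

Theorem lemma1 (n : nat) (hn : 3 <= n) (s t : 'S_n) (x y z : 'I_n)
  (hxy : x != y) (hyz : y != z) (hxz : x != z)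
  (hcomm : forall i : 'I_n, s (t ((s^-1)%g ((t^-1)%g i))) = cyc3 z y x i) :
  (cond_a s x y z /\ ~ cond_b s x y z) \/ (~ cond_a s x y z /\ cond_b s x y z).
Proof.
pose k := (t^-1 * s^-1 * t * s)%g; pose c := (k^-1)%g.
have kE i : k i = cyc3 z y x i by rewrite -hcomm !permM.
have cx : c x = y.
  have ky : k y = x by rewrite kE /cyc3 (negbTE hyz) eqxx.
  by rewrite -ky permK.
have cy : c y = z.
  have kz : k z = y by rewrite kE /cyc3 eqxx.
  by rewrite -kz permK.
have cz : c z = x.
  have kx : k x = z by rewrite kE /cyc3 (negbTE hxz) (negbTE hxy) eqxx.
  by rewrite -kx permK.
have c_fix j : j != x -> j != y -> j != z -> c j = j.
  move=> jx jy jz; have kj : k j = j.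
    by rewrite kE /cyc3 (negbTE jx) (negbTE jy) (negbTE jz).
  by rewrite -{1}kj permK.
have conj : (s * c)%g = (s ^ t)%g.
  by rewrite /c /k conjgE !invMg !invgK !mulgA mulgV mul1g.
have same : same_cycle_type s (s * c)%g by rewrite conj; apply: same_cycle_type_conjg.
have [a|b] := three_cycle_dichotomy hxy hyz hxz cx cy cz c_fix same.
- by left; split=> //; apply: cond_a_excludes_b.
- by right; split=> // /cond_a_excludes_b.
Qed.
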